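(* Consider a multiservice loss system with $K$ call types in which every call type uses the same bandwidth $b>0$ and has the same service rate $\mu>0$: type $j$ calls arrive as a Poisson process of rate $\lambda_j>0$, have exponential holding times of rate $\mu$, and blocking a type-$j$ call costs $\omega_j\ge0$. The link has capacity $C$ with $M=\lfloor C/b\rfloor\ge1$, and a call of any type is accepted iff the current total used capacity $b\sum_k q_k$ is at most $C-b$. Thus the admitted states are $\Omega=\{\bar q\in\mathbb{Z}_{\ge0}^K: |\bar q|\le M\}$, where $|\bar q|=\sum_{k=1}^K q_k$, and the set of accepted types in state $\bar q$ is $R_{\bar q}=\{1,\dots,K\}$ if $|\bar q|<M$ and $R_{\bar q}=\emptyset$ if $|\bar q|=M$. Let $\pi_{\bar q}=G^{-1}\prod_{j=1}^K\frac{(\lambda_j/\mu)^{q_j}}{q_j!}$ for $\bar q\in\Omega$ with $G$ the normalizing constant, let $r_{\bar q}=\sum_{j\notin R_{\bar q}}\omega_j\lambda_j$, $g=\sum_{\bar q\in\Omega}r_{\bar q}\pi_{\bar q}$, and $\rho=\sum_{k=1}^K\lambda_k/\mu$. Define for $\bar q\in\Omega$, with $q=|\bar q|$, $$v(\bar q)=\frac{g}{\mu\rho}\sum_{i=1}^{q}\sum_{m=0}^{q-i}\frac{(q-i)!}{(q-i-m)!}\rho^{-m}.$$ Then $v$ satisfies Howard's equation: for every $\bar q\in\Omega$, $$\sum_{j\in R_{\bar q}}\lambda_j\big(v(\bar q+e_j)-v(\bar q)\big)-\sum_{j=1}^K\mu q_j\big(v(\bar q)-v(\bar q-e_j)\big)=g-r_{\bar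 q},$$ where $e_j$ is the $j$-th unit vector and terms with $q_j=0$ in the second sum are $0$. *)

From mathcomp Require Import all_boot all_order all_algebra.
Set Implicit Arguments. Unset Strict Implicit. Unset Printing Implicit Defensive.
Import Order.TTheory GRing.Theory Num.Theory.
Local Open Scope ring_scope.

Section Loss.
Variables (R : realFieldType) (K M : nat).
Variables (lam omega : 'I_K -> R) (mu : R).

Definition qsize (q : 'I_K -> nat) : nat := (\sum_(k < K) q k)%N.

Definition inOmega (q : 'I_K -> nat) : bool := (qsize q <= M)%N.

Definition accepted (q : 'I_K -> nat) (j : 'I_K) : bool := (qsize q < M)%N.

Definition addE (q : 'I_K -> nat) (j : 'I_K) : 'I_K -> nat :=
  fun k => (q k + (k == j))%N.
Definition subE (q : 'I_K -> nat) (j : 'I_K) : 'I_K -> nat :=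
  fun k => (q k - (k == j))%N.

Definition weight (q : 'I_K -> nat) : R :=
  \prod_(j < K) ((lam j / mu) ^+ (q j) / ((q j)`!)%:R).

(* Omega is enumerated by the finite type {ffun 'I_K -> 'I_M.+1}
   restricted to |q| <= M *)
Definition toState (s : {ffun 'I_K -> 'I_M.+1}) : 'I_K -> nat :=
  fun k => nat_of_ord (s k).

Definition Gnorm : R :=
  \sum_(s : {ffun 'I_K -> 'I_M.+1} | inOmega (toState s)) weight (toState s).

Definition pi (q : 'I_K -> nat) : R := weight q / Gnorm.

Definition rew (q : 'I_K -> nat) : R :=
  \sum_(j < K | ~~ accepted q j) omega j * lam j.

Definition gavg : R :=
  \sum_(s : {ffun 'I_K -> 'I_M.+1} | inOmega (toState s))
     rew (toState s) * pi (toState s).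

Definition rho : R := \sum_(k < K) lam k / mu.

Definition vfun (q : 'I_K -> nat) : R :=
  let n := qsize q in
  gavg / (mu * rho) *
  \sum_(1 <= i < n.+1) \sum_(0 <= m < (n - i).+1)
     (((n - i)`!)%:R / ((n - i - m)`!)%:R * rho ^- m).

End Loss.

(* The value function depends on a state only through its size n, and its
   increments are multiples of T(n) and T(n-1), where
   T(k) = sum_m k!/(k-m)! rho^-m satisfies k T(k-1) = rho (T(k) - 1).  As the
   arrival rates add up to mu rho, Howard's equation reduces to this recurrence
   at interior states, and at full states to g T(M) = sum_j omega_j lam_j.  The
   latter holds because the product-form weights of the states of size n add
   up to rho^n/n! (compare coefficients in a product of exponential series
   truncated at degree M), so that G = sum_(n <= M) rho^n/n! = rho^M/M! T(M). *)

From mathcomp Require Import all_boot all_order all_algebra.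
From mathcomp Require Import ring.
Import Order.TTheory GRing.Theory Num.Theory.
Local Open Scope ring_scope.
Set Implicit Arguments. Unset Strict Implicit.

Lemma take_polyM (R : nzRingType) m (p q : {poly R}) :
  take_poly m (p * q) = take_poly m (take_poly m p * take_poly m q).
Proof.
apply/polyP => k; rewrite !coef_take_poly; case: ifP => // km.
rewrite !coefM; apply: eq_bigr => i _.
have le_ik : (i <= k)%N by rewrite -ltnS.
by rewrite !coef_take_poly (leq_ltn_trans le_ik km) (leq_ltn_trans (leq_subr i k) km).
Qed.

Lemma natr_fact_neq0 (R : numDomainType) n : (n`!)%:R != 0 :> R.
Proof. by rewrite pnatr_eq0 -lt0n fact_gt0. Qed.

Section TruncatedExp.
Variables (R : numFieldType) (m : nat).

Definition texp (a : R) : {poly R} := \poly_(k < m) (a ^+ k / (k`!)%:R).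

Lemma take_texp a : take_poly m (texp a) = texp a.
Proof. exact/take_poly_id/size_poly. Qed.

Lemma take_texpM a b : take_poly m (texp a * texp b) = texp (a + b).
Proof.
apply/polyP => n; rewrite coef_take_poly coef_poly; case: ifP => // nm.
rewrite coefM addrC exprDn mulr_suml; apply: eq_bigr => i _.
have le_in : (i <= n)%N by rewrite -ltnS.
rewrite !coef_poly (leq_ltn_trans le_in nm) (leq_ltn_trans (leq_subr i n) nm).
have := congr1 (fun k => k%:R : R) (bin_fact le_in); rewrite !natrM => binE.
rewrite -mulr_natr -binE; field.
by rewrite !natr_fact_neq0 pnatr_eq0 -lt0n bin_gt0.
Qed.

Lemma texp0 : texp 0 = take_poly m 1.
Proof.
apply/polyP => n; rewrite coef_take_poly coef_poly coef1 expr0n.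
by case: n => [|n] /=; rewrite ?fact0 ?divr1 ?mul0r; case: ifP.
Qed.

Lemma take_prod_texp (I : Type) (r : seq I) (P : pred I) (F : I -> R) :
  take_poly m (\prod_(i <- r | P i) texp (F i)) = texp (\sum_(i <- r | P i) F i).
Proof.
apply: (big_ind2 (fun p a => take_poly m p = texp a)) => [|p1 a1 p2 a2 e1 e2|i _].
- exact/esym/texp0.
- by rewrite take_polyM e1 e2 take_texpM.
- exact: take_texp.
Qed.

End TruncatedExp.

Section FallingSums.
Variables (R : numFieldType) (r : R).

Definition falling_sum (k : nat) : R :=
  \sum_(0 <= m < k.+1) ((k`!)%:R / ((k - m)`!)%:R * r ^- m).

Definition cum_falling_sum (n : nat) : R := \sum_(1 <= i < n.+1) falling_sum (n - i).

Lemma falling_sum0 : falling_sum 0 = 1.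
Proof. by rewrite /falling_sum big_nat1 fact0 expr0 invr1 !mulr1. Qed.

Hypothesis r_neq0 : r != 0.

Lemma falling_sumS k : falling_sum k.+1 = 1 + k.+1%:R / r * falling_sum k.
Proof.
rewrite /falling_sum big_nat_recl // subn0 expr0 invr1 mulr1 divff ?natr_fact_neq0 //.
congr (_ + _); rewrite mulr_sumr; apply: eq_bigr => m _.
rewrite subSS factS natrM exprS; field.
by rewrite !natr_fact_neq0 expf_neq0 ?r_neq0.
Qed.

Lemma falling_sum_pred k : k%:R * falling_sum k.-1 = r * (falling_sum k - 1).
Proof.
case: k => [|k]; first by rewrite falling_sum0 mul0r subrr mulr0.
by rewrite falling_sumS; field.
Qed.

Lemma cum_falling_sumS n : cum_falling_sum n.+1 = falling_sum n + cum_falling_sum n.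
Proof.
rewrite /cum_falling_sum big_nat_recl // subSS subn0.
by congr (_ + _); apply: eq_bigr => i _; rewrite subSS.
Qed.

Lemma texp_falling_sum k :
  r ^+ k / (k`!)%:R * falling_sum k = \sum_(i < k.+1) r ^+ i / (i`!)%:R.
Proof.
elim: k => [|k IHk]; first by rewrite falling_sum0 big_ord1 expr0 fact0 !divr1 mulr1.
rewrite big_ord_recr /= -IHk falling_sumS factS natrM exprS.
by field; rewrite natr_fact_neq0 r_neq0 nat1r pnatr_eq0.
Qed.

End FallingSums.

Section StateSpace.
Variable K : nat.
Implicit Types (q : 'I_K -> nat) (j : 'I_K).

Lemma qsize_addE q j : qsize (addE q j) = (qsize q).+1.
Proof.
have sum_delta : (\sum_(i < K) (i == j))%N = 1%N.
  by rewrite (bigD1 j) //= eqxx big1 // => i /negbTE ->.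
by rewrite /qsize /addE big_split /= sum_delta addn1.
Qed.

Lemma qsize_subE q j : (0 < q j)%N -> qsize q = (qsize (subE q j)).+1.
Proof.
move=> qj_gt0; rewrite -(qsize_addE _ j); apply: eq_bigr => i _.
by rewrite /addE /subE; case: eqP => [->|_]; rewrite ?subnK ?subn0 ?addn0.
Qed.

End StateSpace.

Section LossSystem.
Variables (R : realFieldType) (K M : nat) (lam omega : 'I_K -> R) (mu : R).
Implicit Types (q : 'I_K -> nat) (j : 'I_K).

Local Notation r := (rho lam mu).
Local Notation g := (gavg M lam omega mu).
Local Notation v := (vfun M lam omega mu).

Definition rew_full : R := \sum_j omega j * lam j.

Lemma rew_inOmega q :
  inOmega M q -> rew M lam omega q = if qsize q == M then rew_full else 0.
Proof.
rewrite /inOmega /rew /accepted /rew_full leq_eqVlt.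
case/orP=> [/eqP ->|lt_qM]; first by rewrite ltnn eqxx.
by rewrite lt_qM (ltn_eqF lt_qM) big_pred0.
Qed.

Lemma sum_weight_qsize n : (n <= M)%N ->
  \sum_(s : {ffun 'I_K -> 'I_M.+1} | qsize (toState s) == n) weight lam mu (toState s)
  = r ^+ n / (n`!)%:R.
Proof.
move=> le_nM.
have := take_prod_texp M.+1 (index_enum 'I_K) predT (fun j => lam j / mu).
move/(congr1 (fun p : {poly R} => p`_n)); rewrite coef_take_poly coef_poly ltnS le_nM => <-.
under [in RHS]eq_bigr do rewrite /texp poly_def.
rewrite bigA_distr_bigA coef_sum big_mkcond; apply: eq_bigr => s _.
under [in RHS]eq_bigr do rewrite -mul_polyC.
rewrite big_split /= -rmorph_prod prodrXr coefCM coefXn eq_sym.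
by case: eqP; rewrite ?mulr1 ?mulr0.
Qed.

Lemma Gnorm_texp : Gnorm M lam mu = \sum_(n < M.+1) r ^+ n / (n`!)%:R.
Proof.
under [RHS]eq_bigr => n _ do rewrite -(sum_weight_qsize (ltnSE (ltn_ord n))) big_mkcond.
rewrite exchange_big /Gnorm big_mkcond; apply: eq_bigr => s _ /=.
rewrite -big_mkcond (eq_bigl (fun n : 'I_M.+1 => n == qsize (toState s) :> nat)) => [|n].
  by rewrite (big_ord1_eq _ (fun=> weight lam mu (toState s))) ltnS.
by rewrite eq_sym.
Qed.

Lemma gavgE : g = rew_full * (r ^+ M / (M`!)%:R) / Gnorm M lam mu.
Proof.
rewrite -sum_weight_qsize // mulr_sumr mulr_suml /gavg /pi big_mkcond [RHS]big_mkcond.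
apply: eq_bigr => s _ /=; rewrite /inOmega.
case: leqP => [le_sM|/gtn_eqF -> //]; rewrite rew_inOmega //.
by case: eqP; rewrite ?mul0r ?mulrA.
Qed.

Lemma gavg_falling_sum : 0 < r -> g * falling_sum r M = rew_full.
Proof.
move=> r_gt0; have r_neq0 := lt0r_neq0 r_gt0.
have G_gt0 : 0 < Gnorm M lam mu.
  rewrite Gnorm_texp big_ord_recl expr0 fact0 divr1; apply: ltr_pwDl => //.
  by apply: sumr_ge0 => n _; rewrite divr_ge0 ?exprn_ge0 ?ler0n ?ltW.
rewrite gavgE mulrAC -(mulrA rew_full) texp_falling_sum // -Gnorm_texp.
by rewrite mulfK // lt0r_neq0.
Qed.

Lemma rho_gt0 : (0 < K)%N -> 0 < mu -> (forall j, 0 < lam j) -> 0 < r.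
Proof.
move=> K_gt0 mu_gt0 lam_gt0; rewrite /rho (bigD1 (Ordinal K_gt0)) //=.
apply: ltr_pwDl; first by rewrite divr_gt0.
by apply: sumr_ge0 => j _; rewrite divr_ge0 ?ltW.
Qed.

Lemma sum_lam : mu != 0 -> \sum_j lam j = mu * r.
Proof. by move=> mu_neq0; rewrite /rho mulr_sumr; apply: eq_bigr => j _; rewrite mulrC divfK. Qed.

Lemma vfunE q : v q = g / (mu * r) * cum_falling_sum r (qsize q).
Proof. by []. Qed.

Lemma vfun_addE q j : v (addE q j) - v q = g / (mu * r) * falling_sum r (qsize q).
Proof. by rewrite !vfunE qsize_addE cum_falling_sumS mulrDr addrK. Qed.

Lemma vfun_subE q j : (0 < q j)%N ->
  v q - v (subE q j) = g / (mu * r) * falling_sum r (qsize q).-1.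
Proof. by move=> qj_gt0; rewrite !vfunE (qsize_subE qj_gt0) cum_falling_sumS mulrDr addrK. Qed.

Hypotheses (mu_neq0 : mu != 0) (r_neq0 : r != 0).

Lemma arrival_sum q :
  \sum_(j | accepted M q j) lam j * (v (addE q j) - v q)
  = if (qsize q < M)%N then g * falling_sum r (qsize q) else 0.
Proof.
rewrite /accepted; case: ifP => _; last by rewrite big_pred0_eq.
under eq_bigr do rewrite vfun_addE.
by rewrite -mulr_suml sum_lam // mulrA [_ * (g / _)]mulrC divfK // mulf_neq0.
Qed.

Lemma departure_sum q :
  \sum_j mu * (q j)%:R * (v q - v (subE q j)) = g * (falling_sum r (qsize q) - 1).
Proof.
transitivity (\sum_j mu * (q j)%:R * (g / (mu * r)) * falling_sum r (qsize q).-1).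
  apply: eq_bigr => j _; have [->|qj_gt0] := posnP (q j); first by rewrite !mulr0 !mul0r.
  by rewrite vfun_subE // mulrA.
rewrite -!mulr_suml -mulr_sumr -natr_sum.
rewrite mulrAC -(mulrA mu) falling_sum_pred //.
by field; rewrite mu_neq0 r_neq0.
Qed.

End LossSystem.

Theorem mainTheorem4 (R : realFieldType) (K M : nat)
  (lam omega : 'I_K -> R) (mu : R)
  (hmu : 0 < mu) (hlam : forall j, 0 < lam j) (homega : forall j, 0 <= omega j)
  (hM : (1 <= M)%N)
  (q : 'I_K -> nat) (hq : inOmega M q) :
  \sum_(j < K | accepted M q j)
      lam j * (vfun M lam omega mu (addE q j) - vfun M lam omega mu q)
  - \sum_(j < K) mu * (q j)%:R *
      (vfun M lam omega mu q - vfun M lam omega mu (subE q j))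
  = gavg M lam omega mu - rew M lam omega q.
Proof.
have [K0|K_gt0] := posnP K.
  subst K; rewrite gavgE rew_inOmega // /rew_full !big_ord0 !mul0r if_same.
  by rewrite subrr.
have r_gt0 := rho_gt0 K_gt0 hmu hlam.
have [mu_neq0 r_neq0] := (lt0r_neq0 hmu, lt0r_neq0 r_gt0).
rewrite arrival_sum // departure_sum // rew_inOmega //.
move: hq; rewrite /inOmega leq_eqVlt => /orP[/eqP qM | lt_qM].
  by rewrite qM ltnn eqxx -(gavg_falling_sum M omega r_gt0); ring.
by rewrite lt_qM (ltn_eqF lt_qM); ring.
Qed.
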